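(* Let $k\ge2$ and $\ell\ge1$ be integers. Let $\Omega_u$ be the set of satisfying assignments of the unrestricted depth-$\ell$ gadget and $\Omega_r$ the set of satisfying assignments of the restricted depth-$\ell$ gadget (on the same variable set). Then $\Omega_r\subseteq\Omega_u$ and $$1-2^{-(k-2)\ell}\le\frac{|\Omega_r|}{|\Omega_u|}\le1-2^{-k\ell}.$$
   Context: Gadgets: take variables $U=\{v_{i,j}: i\in[\ell],j\in[k]\}$ ($\ell$ layers of $k$ variables). For each $i\in\{1,\dots,\ell-1\}$ and $j\in[k]$ let $c_{ij}$ be the clause with $\mathrm{vbl}(c_{ij})=\{v_{i,r}:r\ne j\}\cup\{v_{i+1,j}\}$, forbidding the all-True assignment of these variables if $i$ is odd and the all-False assignment if $i$ is even; let $\mathcal C$ be the set of these $k(\ell-1)$ clauses. Let $c$ be the clause on the first layer $\{v_{1,j}:j\in[k]\}$ forbidding the all-True assignment. The unrestricted depth-$\ell$ gadget is the CNF $(U,\mathcal C)$; the restricted depth-$\ell$ gadget is $(U,\mathcal C\cup\{c\})$. *)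

(* Variables v_{i,j} are indexed 0-based by 'I_l * 'I_k:
   paper layer i (1-based) = ordinal i-1, paper index j = ordinal j-1. *)
From mathcomp Require Import all_boot all_order all_algebra.
Set Implicit Arguments. Unset Strict Implicit. Unset Printing Implicit Defensive.

Section Gadget.
Variables l k : nat.
Definition var := ('I_l * 'I_k)%type.
Definition assignment := {ffun var -> bool}.

(* a clause with variable set vbl forbidding the constant assignment b is
   violated by s iff s assigns b to every variable of vbl *)
Definition violated (s : assignment) (vbl : {set var}) (b : bool) : bool :=
  [forall x in vbl, s x == b].

Definition cvbl (i : 'I_l) (j : 'I_k) : {set var} :=
  [set x : var | ((x.1 == i) && (x.2 != j)) ||
                 ((x.1 == i.+1 :> nat) && (x.2 == j))].

(* forbidden value: all-True iff paper layer i+1 is odd iff 0-based i even *)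
Definition cforb (i : 'I_l) : bool := ~~ odd i.

(* clauses c_{ij} exist for paper layers 1..l-1, i.e. 0-based i with i+1<l *)
Definition sat_unrestricted (s : assignment) : bool :=
  [forall i : 'I_l, forall j : 'I_k,
     (i.+1 < l) ==> ~~ violated s (cvbl i j) (cforb i)].

Definition cfirst : {set var} := [set x : var | x.1 == 0 :> nat].

Definition sat_restricted (s : assignment) : bool :=
  sat_unrestricted s && ~~ violated s cfirst true.

Definition Omega_u : {set assignment} := [set s | sat_unrestricted s].
Definition Omega_r : {set assignment} := [set s | sat_restricted s].
End Gadget.

From mathcomp Require Import all_boot all_order all_algebra.
Import GRing.Theory Num.Theory.
Local Open Scope ring_scope.

(* An assignment satisfying the unrestricted gadget but violating the clause
   c on the first layer is forced, layer by layer through the clauses c_{ij},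
   to be the alternating assignment (every variable of a layer equal to the
   value forbidden there), and that assignment does satisfy the unrestricted
   gadget.  Hence |Omega_u| = |Omega_r| + 1 and the ratio is 1 - 1/|Omega_u|.
   Finally 2^((k-2)l) <= |Omega_u| <= 2^(kl): fixing two variables of each
   layer to the non-forbidden value satisfies every c_{ij} whatever the other
   k - 2 variables are. *)

Section Gadget.
Variables l k : nat.
Implicit Types (s : assignment l k) (i : 'I_l) (j : 'I_k).

Lemma violated_cvblE s i (i' : 'I_l) j b : i' = i.+1 :> nat ->
  violated s (cvbl i j) b =
  [forall j', (j' != j) ==> (s (i, j') == b)] && (s (i', j) == b).
Proof.
move=> ei'; apply/forallP/andP => [vio | [/forallP layer /eqP next] [i1 j1]].
  split; last by apply: (implyP (vio (i', j))); rewrite inE /= ei' !eqxx orbT.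
  apply/forallP => j'; apply/implyP => nj'.
  by apply: (implyP (vio (i, j'))); rewrite inE /= eqxx nj'.
apply/implyP; rewrite inE /= => /orP[/andP[/eqP -> nj1] | /andP[ei1 /eqP ->]].
  exact: (implyP (layer j1)).
have -> : i1 = i' by apply: val_inj; rewrite /= ei' (eqP ei1).
by rewrite next.
Qed.

Definition alternating : assignment l k := [ffun x => cforb x.1].

Lemma alternating_sat_unrestricted : sat_unrestricted alternating.
Proof.
apply/forallP => i; apply/forallP => j; apply/implyP => lt_il.
rewrite (@violated_cvblE _ _ (Ordinal lt_il)) // !ffunE /cforb /=.
by case: (odd i); rewrite andbF.
Qed.

Lemma alternating_violated_cfirst : violated alternating (cfirst l k) true.
Proof. by apply/forallP => x; apply/implyP; rewrite inE ffunE /cforb => /eqP ->. Qed.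

Lemma violated_cfirst_alternating s :
  sat_unrestricted s -> violated s (cfirst l k) true -> s = alternating.
Proof.
move=> /forallP sat /forallP first.
suff layer n i : i = n :> nat -> forall j, s (i, j) = cforb i.
  by apply/ffunP => -[i j]; rewrite ffunE; apply: layer.
elim: n i => [|n IHn] i ei j.
  by apply/eqP; rewrite /cforb ei; apply: (implyP (first (i, j))); rewrite inE ei.
have lt_nl : (n < l)%N by apply: ltnW; rewrite -ei.
have /forallP/(_ j)/implyP := sat (Ordinal lt_nl); rewrite /= -ei ltn_ord.
rewrite (@violated_cvblE _ _ i) // => /(_ isT) /nandP[/forall_inPn[j' _] | ].
  by rewrite (IHn (Ordinal lt_nl)) // eqxx.
by rewrite /cforb ei /=; case: (s (i, j)); case: (odd n).
Qed.

Lemma Omega_uE : Omega_u l k = alternating |: Omega_r l k.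
Proof.
apply/setP => s; rewrite !inE /sat_restricted.
have [-> | ne_s] := eqVneq s alternating.
  by rewrite alternating_sat_unrestricted.
case sat: (sat_unrestricted s) => //=; apply/esym/negP => vio.
by rewrite (violated_cfirst_alternating s sat vio) eqxx in ne_s.
Qed.

Lemma card_Omega_u : #|Omega_u l k| = #|Omega_r l k|.+1.
Proof.
rewrite Omega_uE cardsU1 inE /sat_restricted alternating_violated_cfirst.
by rewrite andbF.
Qed.

Lemma card_Omega_u_le : (#|Omega_u l k| <= 2 ^ (k * l))%N.
Proof.
apply: leq_trans (max_card _) _.
by rewrite card_ffun card_bool card_prod !card_ord mulnC.
Qed.

Lemma sat_unrestricted_two_free s :
  (forall i, 1 < #|[set j | s (i, j) != cforb i]|)%N -> sat_unrestricted s.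
Proof.
move=> two_free; apply/forallP => i; apply/forallP => j; apply/implyP => lt_il.
rewrite (@violated_cvblE _ _ (Ordinal lt_il)) //.
have [j1 [j2 []]] := card_gt1P (two_free i); rewrite !inE => free1 free2 n12.
have [j' free' nj'] : exists2 j', s (i, j') != cforb i & j' != j.
  by have [e1 | ] := eqVneq j1 j; [exists j2; rewrite -?e1 // eq_sym | exists j1].
by apply/nandP; left; apply/forall_inPn; exists j'.
Qed.

End Gadget.

Definition pad l k (g : {ffun 'I_l * 'I_k -> bool}) : assignment l k.+2 :=
  [ffun x => if split (x.2 : 'I_(2 + k)) is inr j then g (x.1, j)
             else ~~ cforb x.1].

Lemma card_Omega_u_ge l k : (2 ^ (k * l) <= #|Omega_u l k.+2|)%N.
Proof.
have pad_inj : injective (@pad l k).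
  move=> g1 g2 eq_g; apply/ffunP => -[i j].
  have := congr1 (fun s : assignment l k.+2 => s (i, rshift 2 j)) eq_g.
  by rewrite !ffunE /= (unsplitK (inr _)).
have -> : (2 ^ (k * l) = #|@pad l k @: setT|)%N.
  by rewrite card_imset // cardsT card_ffun card_bool card_prod !card_ord mulnC.
apply/subset_leq_card/subsetP => _ /imsetP[g _ ->]; rewrite inE.
apply: sat_unrestricted_two_free => i; apply/card_gt1P.
exists (lshift k (0 : 'I_2)), (lshift k (1 : 'I_2)).
have lshift_split (a : 'I_2) : split (lshift k a) = inl a := unsplitK (inl a).
by rewrite !inE !ffunE /= !lshift_split; case: (cforb i).
Qed.

Lemma ratio_Omega_r_Omega_u (R : numFieldType) l k :
  (#|Omega_r l k|%:R / #|Omega_u l k|%:R : R) = 1 - #|Omega_u l k|%:R^-1.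
Proof.
have -> : #|Omega_r l k|%:R = #|Omega_u l k|%:R - 1 :> R.
  by rewrite card_Omega_u -natr1 addrK.
by rewrite mulrBl mul1r divff // pnatr_eq0 card_Omega_u.
Qed.

Theorem lemma5p5 (k l : nat) (hk : (2 <= k)%N) (hl : (1 <= l)%N) :
  Omega_r l k \subset Omega_u l k /\
  1 - (2%:R : rat) ^- ((k - 2) * l) <= (#|Omega_r l k|%:R / #|Omega_u l k|%:R : rat) /\
  (#|Omega_r l k|%:R / #|Omega_u l k|%:R : rat) <= 1 - (2%:R : rat) ^- (k * l).
Proof.
split; first by rewrite Omega_uE subsetUr.
rewrite ratio_Omega_r_Omega_u.
have Omega_u_gt0 : (0 < #|Omega_u l k|)%N by rewrite card_Omega_u.
split; rewrite lerD2l lerN2 lef_pV2 ?posrE ?exprn_gt0 ?ltr0n // -natrX ler_nat.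
- by case: k hk Omega_u_gt0 => [|[|k]] // _ _; rewrite !subSS subn0 card_Omega_u_ge.
- exact: card_Omega_u_le.
Qed.
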